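(* For all $\epsilon_1,\epsilon_2\ge0$ with $\epsilon_1+\sqrt{\epsilon_2}<1$ and any two channels $\mathcal{E},\mathcal{M}$ with the same input and output systems, $$D^{\epsilon_1}_H(\mathcal{E}\|\mathcal{M})\le D^{\epsilon_2}_{\max}(\mathcal{E}\|\mathcal{M})+\log\frac{1}{1-\epsilon_1-\sqrt{\epsilon_2}}.$$
   Context: Finite-dimensional Hilbert spaces, $\log$ base 2, channels are CPTP maps. For states: $F(\rho,\sigma)=\|\sqrt\rho\sqrt\sigma\|_1^2$; $D_{\max}(\rho\|\sigma)=\inf\{\lambda:\rho\le2^\lambda\sigma\}$; $D^\epsilon_H(\rho\|\sigma)=\sup\{-\log\mathrm{Tr}[P\sigma]:0\le P\le\mathbb{1},\mathrm{Tr}[P\rho]\ge1-\epsilon\}$. For channels: $F(\mathcal{E}_1,\mathcal{E}_2)=\min_\psi F((\mathrm{id}\otimes\mathcal{E}_1)(\psi),(\mathrm{id}\otimes\mathcal{E}_2)(\psi))$ over pure $\psi$ on reference $\otimes$ input; $D^\epsilon_H(\mathcal{E}\|\mathcal{M})=\sup_\psi D^\epsilon_H((\mathrm{id}\otimes\mathcal{E})(\psi)\|(\mathrm{id}\otimes\mathcal{M})(\psi))$; $D^\epsilon_{\max}(\mathcal{E}\|\mathcal{M})=\inf\{\sup_\psi D_{\max}((\mathrm{id}\otimes\mathcal{E}')(\psi)\|(\mathrm{id}\otimes\mathcal{M})(\psi)):\mathcal{E}'\text{ a channel with }F(\mathcal{E}',\mathcal{E})\ge1-\epsilon\}$. *)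

From HB Require Import structures.
From mathcomp Require Import all_boot all_order all_algebra.
From mathcomp Require Import complex mxtens.
From mathcomp Require Import boolp classical_sets reals constructive_ereal ereal exp.
Set Implicit Arguments. Unset Strict Implicit. Unset Printing Implicit Defensive.
Import Order.TTheory GRing.Theory Num.Theory.
Local Open Scope ring_scope.
Local Open Scope classical_set_scope.

Section QInfo.
Variable R : realType.
Local Notation C := R[i].

Definition adjmx m n (A : 'M[C]_(m, n)) : 'M[C]_(n, m) := (map_mx (@conjc R) A)^T.

Definition psd n (A : 'M[C]_n) : Prop :=
  adjmx A = A /\ forall v : 'cV[C]_n, 0 <= (adjmx v *m A *m v) 0 0.

Definition loewner_le n (A B : 'M[C]_n) : Prop := psd (B - A).

Definition is_state n (rho : 'M[C]_n) : Prop := psd rho /\ \tr rho = 1.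

Definition pure_state n (psi : 'M[C]_n) : Prop :=
  exists v : 'cV[C]_n, (adjmx v *m v) 0 0 = 1 /\ psi = v *m adjmx v.

(** the (unique) PSD square root of a PSD matrix (0 otherwise) *)
Definition sqrtm n (A : 'M[C]_n) : 'M[C]_n :=
  xget 0 [set B : 'M[C]_n | psd B /\ B *m B = A].

Definition trnorm n (A : 'M[C]_n) : R := @complex.Re R (\tr (sqrtm (adjmx A *m A))).

Definition fidelity n (rho sigma : 'M[C]_n) : R :=
  trnorm (sqrtm rho *m sqrtm sigma) ^+ 2.

Definition log2 (x : R) : R := ln x / ln 2.

Definition mlog2 (t : R) : \bar R := if t <= 0 then +oo%E else (- log2 t)%:E.

Definition Dmax n (rho sigma : 'M[C]_n) : \bar R :=
  ereal_inf [set (lam%:E)%E | lam in [set lam : R |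
     loewner_le rho (((2 `^ lam)%:C)%C *: sigma)]].

Definition DH (eps : R) n (rho sigma : 'M[C]_n) : \bar R :=
  ereal_sup [set mlog2 (@complex.Re R (\tr (P *m sigma))) | P in [set P : 'M[C]_n |
     psd P /\ loewner_le P 1%:M /\ 1 - eps <= @complex.Re R (\tr (P *m rho))]].

(** block (i,j) of a matrix on reference (dim k) tensor system (dim d) *)
Definition blk k d (X : 'M[C]_(k * d)) (i j : 'I_k) : 'M[C]_d :=
  \matrix_(a, b) X (mxtens_index (i, a)) (mxtens_index (j, b)).

(** (id_k (x) Phi)(X) *)
Definition idtens k dA dB (Phi : 'M[C]_dA -> 'M[C]_dB) (X : 'M[C]_(k * dA))
  : 'M[C]_(k * dB) :=
  \sum_(i < k) \sum_(j < k) (delta_mx i j *t Phi (blk X i j)).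

Definition is_channel dA dB (Phi : 'M[C]_dA -> 'M[C]_dB) : Prop :=
  [/\ forall (a : C) (X Y : 'M[C]_dA), Phi (a *: X + Y) = a *: Phi X + Phi Y,
      forall X : 'M[C]_dA, \tr (Phi X) = \tr X
    & forall (k : nat) (X : 'M[C]_(k * dA)), psd X -> psd (idtens Phi X)].

Definition chan_fidelity dA dB (E1 E2 : 'M[C]_dA -> 'M[C]_dB) : R :=
  inf [set r : R | exists (k : nat) (psi : 'M[C]_(k * dA)),
          pure_state psi /\ r = fidelity (idtens E1 psi) (idtens E2 psi)].

Definition DH_chan (eps : R) dA dB (E M : 'M[C]_dA -> 'M[C]_dB) : \bar R :=
  ereal_sup [set x : \bar R | exists (k : nat) (psi : 'M[C]_(k * dA)),
          pure_state psi /\ x = DH eps (idtens E psi) (idtens M psi)].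

Definition Dmax_chan0 dA dB (E M : 'M[C]_dA -> 'M[C]_dB) : \bar R :=
  ereal_sup [set x : \bar R | exists (k : nat) (psi : 'M[C]_(k * dA)),
          pure_state psi /\ x = Dmax (idtens E psi) (idtens M psi)].

Definition Dmax_chan (eps : R) dA dB (E M : 'M[C]_dA -> 'M[C]_dB) : \bar R :=
  ereal_inf [set Dmax_chan0 E' M | E' in [set E' : 'M[C]_dA -> 'M[C]_dB |
          is_channel E' /\ 1 - eps <= chan_fidelity E' E]].

End QInfo.

From HB Require Import structures.
From mathcomp Require Import all_boot all_order all_algebra.
From mathcomp Require Import complex mxtens.
From mathcomp Require Import boolp classical_sets reals constructive_ereal ereal exp.
From mathcomp Require Import spectral sesquilinear ring lra.
Import Order.TTheory GRing.Theory Num.Theory.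
Set Implicit Arguments. Unset Strict Implicit. Unset Printing Implicit Defensive.
Local Open Scope ring_scope.

(* Fix a pure input psi and let rho, rho' and sigma be its images under E, under
   a channel E' with F(E', E) >= 1 - eps2, and under M.  Let 0 <= P <= 1 be a
   test with p := Tr[P rho] >= 1 - eps1 and put q := Tr[P rho'].  Taking a polar
   decomposition Z^* (sqrt rho' sqrt rho) = |sqrt rho' sqrt rho| with Z a
   contraction, splitting 1 = P + (1 - P) and applying Cauchy-Schwarz to each
   half gives sqrt F(rho', rho) <= sqrt(qp) + sqrt((1-q)(1-p)), whence
   F(rho', rho) <= 1 - (p - q)^2.  As F(rho', rho) >= 1 - eps2, this forces
   q >= 1 - eps1 - sqrt eps2.  Finally rho' <= 2^lam sigma gives
   q <= 2^lam Tr[P sigma], i.e. -log Tr[P sigma] <= lam + log 1/(1 - eps1 - sqrt eps2). *)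

Section RealInequalities.
Variable R : rcfType.

Lemma quadratic_ge0_discr (a b r : R) : 0 <= a ->
  (forall t, 0 <= t ^+ 2 * a - 2 * t * r + b) -> r ^+ 2 <= a * b.
Proof.
move=> a0 quad_ge0; case: (eqVneq a 0) => [a_eq0|a_neq0].
  subst a; case: (eqVneq r 0) => [->|r_neq0]; first by rewrite expr0n /= mul0r.
  have := quad_ge0 ((b + 1) / (2 * r)).
  have -> : ((b + 1) / (2 * r)) ^+ 2 * 0 - 2 * ((b + 1) / (2 * r)) * r + b = -1.
    by field; rewrite ?r_neq0 ?pnatr_eq0 ?andbT.
  by move=> h; exfalso; lra.
have a_gt0 : 0 < a by rewrite lt_def a_neq0 a0.
have := quad_ge0 (r / a).
have -> : (r / a) ^+ 2 * a - 2 * (r / a) * r + b = (a * b - r ^+ 2) / a by field.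
by rewrite pmulr_lge0 ?invr_gt0 // subr_ge0.
Qed.

Lemma ler_sqrt_of_sqr (r c : R) : r ^+ 2 <= c -> r <= Num.sqrt c.
Proof.
move=> h; case: (lerP r 0) => [r_le0|r_gt0]; first exact: le_trans r_le0 (sqrtr_ge0 c).
by rewrite -(ger0_norm (ltW r_gt0)) -sqrtr_sqr ler_wsqrtr.
Qed.

Lemma binary_fidelity_le (p q : R) : 0 <= p <= 1 -> 0 <= q <= 1 ->
  (Num.sqrt (q * p) + Num.sqrt ((1 - q) * (1 - p))) ^+ 2 <= 1 - (p - q) ^+ 2.
Proof.
move=> /andP[p0 p1] /andP[q0 q1].
have q'0 : 0 <= 1 - q by rewrite subr_ge0.
have p'0 : 0 <= 1 - p by rewrite subr_ge0.
set x := Num.sqrt (q * p); set y := Num.sqrt ((1 - q) * (1 - p)).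
set u := Num.sqrt (q * (1 - q)); set v := Num.sqrt (p * (1 - p)).
have hx : x ^+ 2 = q * p by rewrite sqr_sqrtr // mulr_ge0.
have hy : y ^+ 2 = (1 - q) * (1 - p) by rewrite sqr_sqrtr // mulr_ge0.
have hu : u ^+ 2 = q * (1 - q) by rewrite sqr_sqrtr // mulr_ge0.
have hv : v ^+ 2 = p * (1 - p) by rewrite sqr_sqrtr // mulr_ge0.
have hxy : x * y = u * v.
  by rewrite /x /y /u /v -!sqrtrM ?mulr_ge0 //; congr Num.sqrt; ring.
(* 1 - (p - q)^2 - (x + y)^2 = u^2 + v^2 - 2 x y = (u - v)^2 *)
have : 0 <= (u - v) ^+ 2 by exact: sqr_ge0.
nra.
Qed.

End RealInequalities.

Section Quantum.
Local Open Scope sesquilinear_scope.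
Local Open Scope complex_scope.
Variable R : realType.
Local Notation C := R[i].

Lemma ReD (x y : C) : complex.Re (x + y) = complex.Re x + complex.Re y.
Proof. by case: x; case: y. Qed.

Lemma ReB (x y : C) : complex.Re (x - y) = complex.Re x - complex.Re y.
Proof. by case: x; case: y. Qed.

Lemma Re_ge0 (x : C) : 0 <= x -> 0 <= complex.Re x.
Proof. by case: x => a b; rewrite lecE /= => /andP[]. Qed.

Lemma ge0_complexE (x : C) : 0 <= x -> x = (complex.Re x)%:C.
Proof. by case: x => a b; rewrite lecE /= => /andP[/eqP-> _]. Qed.

Lemma ge0_conjc (x : C) : 0 <= x -> conjc x = x.
Proof. by move=> /ge0_complexE ->; rewrite conjc_real. Qed.

Lemma adjmxE m n (A : 'M[C]_(m, n)) : adjmx A = A ^t*.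
Proof. by rewrite /adjmx map_trmx. Qed.

Lemma adjmxK m n (A : 'M[C]_(m, n)) : adjmx (adjmx A) = A.
Proof. by apply/matrixP=> i j; rewrite !mxE conjcK. Qed.

Lemma adjmxM m n p (A : 'M[C]_(m, n)) (B : 'M[C]_(n, p)) :
  adjmx (A *m B) = adjmx B *m adjmx A.
Proof. by rewrite /adjmx map_mxM trmx_mul. Qed.

Lemma adjmxD m n (A B : 'M[C]_(m, n)) : adjmx (A + B) = adjmx A + adjmx B.
Proof. by apply/matrixP=> i j; rewrite !mxE rmorphD. Qed.

Lemma adjmxB m n (A B : 'M[C]_(m, n)) : adjmx (A - B) = adjmx A - adjmx B.
Proof. by apply/matrixP=> i j; rewrite !mxE rmorphB. Qed.

Lemma adjmxZ m n a (A : 'M[C]_(m, n)) : adjmx (a *: A) = conjc a *: adjmx A.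
Proof. by apply/matrixP=> i j; rewrite !mxE rmorphM. Qed.

Lemma adjmx1 n : adjmx (1%:M : 'M[C]_n) = 1%:M.
Proof. by apply/matrixP=> i j; rewrite !mxE rmorphMn rmorph1 eq_sym. Qed.

Lemma adjmx_diag n (d : 'rV[C]_n) : adjmx (diag_mx d) = diag_mx (map_mx conjc d).
Proof.
apply/matrixP=> i j; rewrite !mxE rmorphMn eq_sym.
by case: (eqVneq i j) => [->|]; rewrite ?mulr1n ?mulr0n.
Qed.

Lemma mxtrace_adj n (A : 'M[C]_n) : \tr (adjmx A) = conjc (\tr A).
Proof. by rewrite /mxtrace rmorph_sum; apply: eq_bigr => i _; rewrite !mxE. Qed.

Lemma adjmx_cV_mul_ge0 m (w : 'cV[C]_m) : 0 <= (adjmx w *m w) 0 0.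
Proof.
rewrite mxE; apply: sumr_ge0 => i _; rewrite !mxE mulrC; exact: mulcJ_ge0.
Qed.

Lemma psd_adjmx_mul m n (B : 'M[C]_(m, n)) : psd (adjmx B *m B).
Proof.
split; first by rewrite adjmxM adjmxK.
move=> v; rewrite !mulmxA -[_ *m B *m v]mulmxA -adjmxM.
exact: adjmx_cV_mul_ge0.
Qed.

Lemma psd_congruence n m (A : 'M[C]_n) (B : 'M[C]_(n, m)) :
  psd A -> psd (adjmx B *m A *m B).
Proof.
move=> [hA pA]; split; first by rewrite !adjmxM adjmxK hA mulmxA.
by move=> v; have := pA (B *m v); rewrite adjmxM !mulmxA.
Qed.

Lemma psd_diag_ge0 n (A : 'M[C]_n) i : psd A -> 0 <= A i i.
Proof.
move=> [_ pA]; have := pA (delta_mx i 0).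
have -> : adjmx (delta_mx i 0 : 'cV[C]_n) = delta_mx 0 i.
  by apply/matrixP=> a b; rewrite !mxE conjc_nat andbC.
by rewrite -colE -rowE !mxE.
Qed.

Lemma psd_mxtrace_ge0 n (A : 'M[C]_n) : psd A -> 0 <= \tr A.
Proof. by move=> pA; apply: sumr_ge0 => i _; exact: psd_diag_ge0. Qed.

Lemma psd_diag_mx n (d : 'rV[C]_n) : (forall i, 0 <= d 0 i) -> psd (diag_mx d).
Proof.
move=> d0; split.
  by rewrite adjmx_diag; congr diag_mx; apply/rowP=> i; rewrite !mxE ge0_conjc.
move=> v; rewrite mul_mx_diag mxE; apply: sumr_ge0 => i _; rewrite !mxE.
rewrite mulrAC; apply: mulr_ge0; last exact: d0.
by rewrite mulrC; exact: mulcJ_ge0.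
Qed.

Lemma psd_hermitian_idem n (G : 'M[C]_n) : adjmx G = G -> G *m G = G -> psd G.
Proof. by move=> hG iG; rewrite -iG -{1}hG; exact: psd_adjmx_mul. Qed.

Lemma psd_spectral n (A : 'M[C]_n) : psd A -> exists (P : 'M[C]_n) (d : 'rV[C]_n),
  [/\ P *m adjmx P = 1%:M, adjmx P *m P = 1%:M, A = adjmx P *m diag_mx d *m P
    & forall i, 0 <= d 0 i].
Proof.
move=> pA; set P := spectralmx A.
have uP : P \is unitarymx := spectral_unitarymx A.
have PP1 : P *m adjmx P = 1%:M by rewrite adjmxE; exact/unitarymxP.
have PP2 : adjmx P *m P = 1%:M.
  by rewrite adjmxE -invmx_unitary // mulVmx // unitarymx_unit.
have nA : A \is normalmx by apply/normalmxP; rewrite -adjmxE pA.1.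
have eA := orthomx_spectralP nA.
rewrite invmx_unitary // -adjmxE -/P in eA.
exists P, (spectral_diag A); split => // i.
have := psd_diag_ge0 i (psd_congruence (adjmx P) pA).
by rewrite adjmxK {1}eA !mulmxA PP1 mul1mx -mulmxA PP1 mulmx1 mxE eqxx mulr1n.
Qed.

Lemma psd_sqrt_exists n (A : 'M[C]_n) : psd A -> exists B, psd B /\ B *m B = A.
Proof.
move=> /psd_spectral [P [d [PP1 PP2 eA d0]]].
pose s : 'rV[C]_n := \row_i (Num.sqrt (complex.Re (d 0 i)))%:C.
exists (adjmx P *m diag_mx s *m P); split.
  apply: psd_congruence; apply: psd_diag_mx => i; rewrite mxE lecR; exact: sqrtr_ge0.
rewrite !mulmxA -(mulmxA _ P) PP1 mulmx1 -[adjmx P *m _ *m diag_mx s]mulmxA.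
rewrite mulmx_diag eA; congr (_ *m diag_mx _ *m _); apply/rowP=> i.
rewrite !mxE -rmorphM /= -expr2 sqr_sqrtr -?ge0_complexE //.
exact/Re_ge0.
Qed.

Lemma sqrtmP n (A : 'M[C]_n) : psd A -> psd (sqrtm A) /\ sqrtm A *m sqrtm A = A.
Proof. by move=> pA; apply: (xgetPex 0 (psd_sqrt_exists pA)). Qed.

Lemma trnorm_ge0 n (A : 'M[C]_n) : 0 <= trnorm A.
Proof. exact/Re_ge0/psd_mxtrace_ge0/(sqrtmP (psd_adjmx_mul A)).1. Qed.

Lemma psd_mxtrace_mul_ge0 n (A B : 'M[C]_n) : psd A -> psd B -> 0 <= \tr (A *m B).
Proof.
move=> pA pB; have [[hS pS] SS] := sqrtmP pB.
rewrite -SS mulmxA mxtrace_mulC mulmxA -{1}hS; apply: psd_mxtrace_ge0.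
exact: psd_congruence.
Qed.

Lemma Re_mxtrace_mul_le n (K G : 'M[C]_n) : psd K -> psd (1%:M - G) ->
  complex.Re (\tr (K *m G)) <= complex.Re (\tr K).
Proof.
move=> pK pG; have := Re_ge0 (psd_mxtrace_mul_ge0 pK pG).
by rewrite mulmxBr mulmx1 linearB /= ReB subr_ge0.
Qed.

Lemma mxtrace_cauchy_schwarz n (A B : 'M[C]_n) :
  complex.Re (\tr (adjmx A *m B)) <=
  Num.sqrt (complex.Re (\tr (adjmx A *m A)) * complex.Re (\tr (adjmx B *m B))).
Proof.
apply: ler_sqrt_of_sqr; apply: quadratic_ge0_discr.
  exact/Re_ge0/psd_mxtrace_ge0/psd_adjmx_mul.
have trBA : \tr (adjmx B *m A) = conjc (\tr (adjmx A *m B)).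
  by rewrite -mxtrace_adj adjmxM adjmxK.
move=> t; have := Re_ge0 (psd_mxtrace_ge0 (psd_adjmx_mul (t%:C *: A - B))).
rewrite adjmxB adjmxZ conjc_real mulmxBl !mulmxBr -!scalemxAl -!scalemxAr.
rewrite !linearB !linearZ /= trBA.
move: (\tr (adjmx A *m A)) (\tr (adjmx A *m B)) (\tr (adjmx B *m B)).
by move=> [a1 a2] [r1 r2] [b1 b2] /=; nra.
Qed.

(* Z := X P^* D^+ P, where T = P^* D P and D^+ is the pseudo-inverse of D;
   then Z Z^* is the orthogonal projection onto the range of X. *)
Lemma polar_contraction n (X T : 'M[C]_n) : psd T -> T *m T = adjmx X *m X ->
  exists Z : 'M[C]_n, adjmx Z *m X = T /\ psd (1%:M - Z *m adjmx Z).
Proof.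
move=> pT TT; have [P [d [PP1 PP2 eT d0]]] := psd_spectral pT.
have [Y eY] : exists Y, Y = X *m adjmx P by eexists.
pose e : 'rV[C]_n := \row_i (d 0 i)^-1.
pose W := Y *m diag_mx e.
have he : adjmx (diag_mx e) = diag_mx e.
  rewrite adjmx_diag; congr diag_mx; apply/rowP=> i; rewrite !mxE conjc_inv.
  by rewrite ge0_conjc.
have PTP : P *m T *m adjmx P = diag_mx d.
  by rewrite eT !mulmxA PP1 mul1mx -mulmxA PP1 mulmx1.
have YY : adjmx Y *m Y = diag_mx d *m diag_mx d.
  rewrite eY adjmxM adjmxK !mulmxA -(mulmxA P) -TT -PTP.
  by rewrite !mulmxA -[P *m T *m adjmx P *m P]mulmxA PP2 mulmx1.
have XY : X = Y *m P by rewrite eY -mulmxA PP2 mulmx1.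
exists (W *m P); split.
  rewrite adjmxM /W adjmxM he XY !mulmxA -(mulmxA _ (adjmx Y)) YY.
  rewrite eT -!mulmxA; congr (_ *m _); rewrite !mulmxA; congr (_ *m _).
  rewrite !mulmx_diag; congr diag_mx; apply/rowP=> i; rewrite !mxE.
  case: (eqVneq (d 0 i) 0) => [->|nz]; first by rewrite !mulr0.
  by rewrite mulVf // mul1r.
have -> : W *m P *m adjmx (W *m P) = Y *m (diag_mx e *m diag_mx e) *m adjmx Y.
  by rewrite adjmxM -mulmxA (mulmxA P) PP1 mul1mx /W adjmxM he !mulmxA.
set K := Y *m _ *m adjmx Y.
have hK : adjmx K = K.
  by rewrite /K !adjmxM adjmxK he !mulmxA.
have KK : K *m K = K.
  rewrite /K -!mulmxA (mulmxA (adjmx Y)) YY !mulmxA; congr (_ *m _).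
  rewrite -!mulmxA; congr (_ *m _); rewrite !mulmxA !mulmx_diag; congr diag_mx.
  apply/rowP=> i; rewrite !mxE.
  case: (eqVneq (d 0 i) 0) => [->|nz]; first by rewrite invr0 !mul0r.
  by field.
apply: psd_hermitian_idem; first by rewrite adjmxB adjmx1 hK.
by rewrite mulmxBl !mulmxBr !mul1mx !mulmx1 KK subrr subr0.
Qed.

Lemma Re_mxtrace_contraction_le n (S' S M Z : 'M[C]_n) :
  psd S' -> psd S -> psd M -> psd (1%:M - Z *m adjmx Z) ->
  complex.Re (\tr (adjmx Z *m S' *m M *m S)) <=
  Num.sqrt (complex.Re (\tr (M *m (S' *m S'))) * complex.Re (\tr (M *m (S *m S)))).
Proof.
move=> [hS' pS'] [hS pS] pM pZ.
have [[hR pR] RR] := sqrtmP pM; set Rm := sqrtm M in hR pR RR *.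
have cs := mxtrace_cauchy_schwarz (Rm *m S' *m Z) (Rm *m S).
rewrite !adjmxM hR hS' hS !mulmxA -!(mulmxA _ Rm Rm) RR in cs.
apply: le_trans cs _; apply: ler_wsqrtr.
have -> : \tr (M *m (S *m S)) = \tr (S *m M *m S).
  by rewrite [LHS]mxtrace_mulC [RHS]mxtrace_mulC !mulmxA.
have -> : \tr (M *m (S' *m S')) = \tr (S' *m M *m S').
  by rewrite [LHS]mxtrace_mulC [RHS]mxtrace_mulC !mulmxA.
apply: ler_wpM2r.
  by apply/Re_ge0/psd_mxtrace_ge0; rewrite -{1}hS; exact: psd_congruence.
have -> : \tr (adjmx Z *m S' *m M *m S' *m Z) = \tr (S' *m M *m S' *m (Z *m adjmx Z)).
  by rewrite [LHS]mxtrace_mulC [RHS]mxtrace_mulC !mulmxA.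
by apply: Re_mxtrace_mul_le => //; rewrite -{1}hS'; exact: psd_congruence.
Qed.

Lemma trnorm_sqrtm_mul_le n (rho rho' P : 'M[C]_n) :
  psd rho -> psd rho' -> psd P -> loewner_le P 1%:M ->
  trnorm (sqrtm rho' *m sqrtm rho) <=
    Num.sqrt (complex.Re (\tr (P *m rho')) * complex.Re (\tr (P *m rho))) +
    Num.sqrt (complex.Re (\tr ((1%:M - P) *m rho')) *
              complex.Re (\tr ((1%:M - P) *m rho))).
Proof.
move=> prho prho' pP pP'.
have [pS' SS'] := sqrtmP prho'; have [pS SS] := sqrtmP prho.
set S' := sqrtm rho' in pS' SS' *; set S := sqrtm rho in pS SS *.
have [pT TT] := sqrtmP (psd_adjmx_mul (S' *m S)).
have [Z [ZX pZ]] := polar_contraction pT TT.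
rewrite /trnorm -ZX.
have -> : adjmx Z *m (S' *m S) =
    adjmx Z *m S' *m P *m S + adjmx Z *m S' *m (1%:M - P) *m S.
  by rewrite -mulmxDl -mulmxDr addrC subrK mulmx1 mulmxA.
rewrite linearD /= ReD -SS' -SS.
by apply: lerD; apply: Re_mxtrace_contraction_le.
Qed.

Lemma fidelity_test_bound n (rho rho' P : 'M[C]_n) :
  is_state rho -> is_state rho' -> psd P -> loewner_le P 1%:M ->
  (complex.Re (\tr (P *m rho)) - complex.Re (\tr (P *m rho'))) ^+ 2
    + fidelity rho' rho <= 1.
Proof.
move=> [prho trho] [prho' trho'] pP pP'.
have := trnorm_sqrtm_mul_le prho prho' pP pP'.
set p := complex.Re (\tr (P *m rho)); set q := complex.Re (\tr (P *m rho')).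
have e1 : complex.Re (\tr ((1%:M - P) *m rho)) = 1 - p.
  by rewrite mulmxBl mul1mx linearB /= ReB trho.
have e1' : complex.Re (\tr ((1%:M - P) *m rho')) = 1 - q.
  by rewrite mulmxBl mul1mx linearB /= ReB trho'.
rewrite e1 e1' => tn_le.
have hp : 0 <= p <= 1.
  have p1 : 0 <= 1 - p by rewrite -e1; exact/Re_ge0/psd_mxtrace_mul_ge0.
  by rewrite -[p <= 1]subr_ge0 p1 andbT; exact/Re_ge0/psd_mxtrace_mul_ge0.
have hq : 0 <= q <= 1.
  have q1 : 0 <= 1 - q by rewrite -e1'; exact/Re_ge0/psd_mxtrace_mul_ge0.
  by rewrite -[q <= 1]subr_ge0 q1 andbT; exact/Re_ge0/psd_mxtrace_mul_ge0.
have := binary_fidelity_le hp hq; rewrite /fidelity.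
have : trnorm (sqrtm rho' *m sqrtm rho) ^+ 2 <=
    (Num.sqrt (q * p) + Num.sqrt ((1 - q) * (1 - p))) ^+ 2.
  by rewrite ler_pXn2r // nnegrE ?trnorm_ge0 //; apply: le_trans tn_le; exact: trnorm_ge0.
lra.
Qed.

Lemma sum_mxtens_index m n (F : 'I_(m * n) -> C) :
  \sum_(x < m * n) F x = \sum_(i < m) \sum_(j < n) F (mxtens_index (i, j)).
Proof.
rewrite (reindex (@mxtens_index m n)); last first.
  by exists (@mxtens_unindex m n) => x _; rewrite ?mxtens_indexK ?mxtens_unindexK.
by rewrite pair_big /=; apply: eq_bigr => -[i j].
Qed.

Lemma mxtrace_tens m n (A : 'M[C]_m) (B : 'M[C]_n) : \tr (A *t B) = \tr A * \tr B.
Proof.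
rewrite /mxtrace sum_mxtens_index mulr_suml; apply: eq_bigr => i _.
by rewrite mulr_sumr; apply: eq_bigr => j _; rewrite tensmxE.
Qed.

Lemma mxtrace_delta n (i j : 'I_n) : \tr (delta_mx i j : 'M[C]_n) = (i == j)%:R.
Proof.
rewrite /mxtrace (bigD1 i) //= big1 ?addr0 => [|k /negPf ki]; rewrite mxE ?eqxx //.
by rewrite ki.
Qed.

Lemma mxtrace_idtens k dA dB (Phi : 'M[C]_dA -> 'M[C]_dB) (X : 'M[C]_(k * dA)) :
  (forall Y, \tr (Phi Y) = \tr Y) -> \tr (idtens Phi X) = \tr X.
Proof.
move=> tr_Phi; rewrite /idtens linear_sum [RHS]/mxtrace sum_mxtens_index.
apply: eq_bigr => i _; rewrite linear_sum (bigD1 i) //= big1 ?addr0 => [|j ji].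
  rewrite mxtrace_tens mxtrace_delta eqxx mul1r tr_Phi.
  by apply: eq_bigr => a _; rewrite mxE.
by rewrite mxtrace_tens mxtrace_delta eq_sym (negPf ji) mul0r.
Qed.

Lemma pure_state_is_state n (psi : 'M[C]_n) : pure_state psi -> is_state psi.
Proof.
case=> v [v1 ->]; split; first by have := psd_adjmx_mul (adjmx v); rewrite adjmxK.
by rewrite mxtrace_mulC /mxtrace big_ord1.
Qed.

Lemma channel_idtens_state k dA dB (Phi : 'M[C]_dA -> 'M[C]_dB) (rho : 'M[C]_(k * dA)) :
  is_channel Phi -> is_state rho -> is_state (idtens Phi rho).
Proof. by case=> _ tr_Phi cp_Phi [prho trho]; split; [exact: cp_Phi | rewrite mxtrace_idtens]. Qed.

Lemma chan_fidelity_le dA dB (E1 E2 : 'M[C]_dA -> 'M[C]_dB) k (psi : 'M[C]_(k * dA)) :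
  pure_state psi -> chan_fidelity E1 E2 <= fidelity (idtens E1 psi) (idtens E2 psi).
Proof.
move=> ppsi; apply: ge_inf; last by exists k, psi.
by exists 0 => _ [k' [psi' [_ ->]]]; exact: sqr_ge0.
Qed.

Lemma log2_le_of_powR_mul (t q c lam : R) : 0 < c -> c <= q -> q <= 2 `^ lam * t ->
  - log2 t - log2 (1 / c) <= lam.
Proof.
move=> c_gt0 c_le_q q_le.
have pow_gt0 : 0 < 2 `^ lam :> R by apply: powR_gt0.
have ln2_gt0 : 0 < ln (2 : R) by apply: ln_gt0; rewrite ltr1n.
have t_gt0 : 0 < t.
  have : 0 < 2 `^ lam * t by apply: lt_le_trans c_gt0 (le_trans c_le_q q_le).
  by rewrite pmulr_rgt0.
have : ln c <= ln (2 `^ lam * t).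
  by rewrite ler_ln ?posrE ?mulr_gt0 //; apply: le_trans q_le.
rewrite lnM ?posrE // ln_powR /log2 div1r lnV ?posrE // => h.
have -> : - (ln t / ln 2) - - ln c / ln 2 = (ln c - ln t) / ln (2 : R).
  by field; apply: lt0r_neq0.
rewrite ler_pdivrMr //; lra.
Qed.

Local Open Scope classical_set_scope.

Lemma mlog2_le_Dmax n (rho sigma P : 'M[C]_n) (c : R) : psd P -> 0 < c ->
  c <= complex.Re (\tr (P *m rho)) ->
  (mlog2 (complex.Re (\tr (P *m sigma))) <= Dmax rho sigma + (log2 (1 / c))%:E)%E.
Proof.
move=> pP c_gt0 c_le_q; rewrite /Dmax.
set S := [set lam : R | _].
case: (pselect (exists lam, S lam)) => [[lam0 Slam0]|noS]; last first.
  have -> : [set (lam%:E)%E | lam in S] = set0.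
    by apply/seteqP; split => // y [lam Sl _]; apply: noS; exists lam.
  by rewrite ereal_inf0 addye // leey.
set t := complex.Re (\tr (P *m sigma)).
have q_le : forall lam, S lam -> complex.Re (\tr (P *m rho)) <= 2 `^ lam * t.
  move=> lam Sl; have := Re_ge0 (psd_mxtrace_mul_ge0 pP Sl).
  rewrite mulmxBr linearB /= ReB subr_ge0 -scalemxAr linearZ /= /t.
  by case: (\tr (P *m sigma)) => a b /=; rewrite !mul0r subr0.
have t_gt0 : 0 < t.
  have : 0 < 2 `^ lam0 * t by apply: lt_le_trans c_gt0 (le_trans c_le_q (q_le _ Slam0)).
  by rewrite pmulr_rgt0 // powR_gt0.
rewrite /mlog2 (leNgt t) t_gt0 /= -leeBlDr //.
apply: le_ereal_inf_tmp => _ [lam Sl <-].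
by rewrite lee_fin; exact: log2_le_of_powR_mul c_gt0 c_le_q (q_le lam Sl).
Qed.

Lemma DH_le_Dmax_smooth (eps1 eps2 : R) n (rho rho' sigma : 'M[C]_n) :
  eps1 + Num.sqrt eps2 < 1 -> is_state rho -> is_state rho' ->
  1 - eps2 <= fidelity rho' rho ->
  (DH eps1 rho sigma <= Dmax rho' sigma + (log2 (1 / (1 - eps1 - Num.sqrt eps2)))%:E)%E.
Proof.
move=> eps_lt1 srho srho' hF.
apply: ge_ereal_sup => _ [P [pP [pP' p_ge]] <-].
apply: mlog2_le_Dmax => //; first lra.
have := fidelity_test_bound srho srho' pP pP'.
set p := complex.Re _; set q := complex.Re _ => hb.
have : p - q <= Num.sqrt eps2 by apply: ler_sqrt_of_sqr; lra.
lra.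
Qed.

End Quantum.

Theorem lemma4 (R : realType) (eps1 eps2 : R) (dA dB : nat)
    (E M : 'M[R[i]]_dA -> 'M[R[i]]_dB) :
  0 <= eps1 -> 0 <= eps2 -> eps1 + Num.sqrt eps2 < 1 ->
  is_channel E -> is_channel M ->
  (DH_chan eps1 E M <=
     Dmax_chan eps2 E M + (log2 (1 / (1 - eps1 - Num.sqrt eps2)))%:E)%E.
Proof.
move=> _ _ eps_lt1 chE _.
apply: ge_ereal_sup => _ [k [psi [ppsi ->]]].
rewrite -leeBlDr //.
apply: le_ereal_inf_tmp => _ [E' [chE' hF] <-].
have Dmax_le : (Dmax (idtens E' psi) (idtens M psi) <= Dmax_chan0 E' M)%E.
  by apply: ereal_sup_ubound; exists k, psi.
apply: le_trans Dmax_le; rewrite leeBlDr //.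
have spsi := pure_state_is_state ppsi.
apply: DH_le_Dmax_smooth => //; try exact: channel_idtens_state.
exact: le_trans hF (chan_fidelity_le _ _ ppsi).
Qed.
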